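(* Let $A$ be a closed densely defined operator in $\mathcal H$ and $G$ a bounded metric operator in $\mathcal H$ (with $G^{-1}$ possibly unbounded). Consider the conditions: (i) $GD(A)=D(A^* )$ and $A^*G\xi=GA\xi$ for every $\xi\in D(A)$; (ii) the operator $G^{1/2}AG^{-1/2}$, with domain $G^{1/2}D(A)$, is self-adjoint in $\mathcal H$; (iii) $A$ is self-adjoint in $\mathcal H(G)$; (iv) $GD(A)=D(G^{-1}A^* )$ and $A^*G\xi=GA\xi$ for every $\xi\in D(A)$. Then (i) $\Rightarrow$ (ii) $\Rightarrow$ (iii) $\Rightarrow$ (iv). If moreover the range $R(A^* )$ is contained in $D(G^{-1})$, then (i)–(iv) are equivalent.
   Context: A metric operator in $\mathcal H$ is a self-adjoint operator $G$ with $\langle G\xi,\xi\rangle>0$ for all nonzero $\xi\in D(G)$; $G^{-1}$, $G^{-1/2}$ denote the (possibly unbounded) inverses of $G$, $G^{1/2}$. For bounded metric $G$, $\mathcal H(G)$ is the completion of $\mathcal H$ under $\|\xi\|_G=\|G^{1/2}\xi\|$ with inner product $\langle\xi,\eta\rangle_G=\langle G^{1/2}\xi,G^{1/2}\eta\rangle$; $D(A)$ is dense in $\mathcal H(G)$, and ''$A$ is self-adjoint in $\mathcal H(G)$'' means $A=A^\#$, where $A^\#$ is the adjoint in $\mathcal H(G)$ of $A$ viewed as an operator in $\mathcal H(G)$ with domain $D(A)$. $D(G^{-1}A^* )=\{\zeta\in D(A^* ): A^*\zeta\in D(G^{-1})\}$. *)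

From Stdlib Require Import Reals Classical ClassicalEpsilon.
Open Scope R_scope.
Set Implicit Arguments.

Record C := mkC { Re : R; Im : R }.
Definition C0 : C := mkC 0 0.
Definition C1 : C := mkC 1 0.
Definition Cadd (a b : C) : C := mkC (Re a + Re b) (Im a + Im b).
Definition Cmul (a b : C) : C :=
  mkC (Re a * Re b - Im a * Im b) (Re a * Im b + Im a * Re b).
Definition Cconj (a : C) : C := mkC (Re a) (- Im a).

Record Hilbert := {
  hcar :> Type;
  hzero : hcar;
  hadd : hcar -> hcar -> hcar;
  hopp : hcar -> hcar;
  hscal : C -> hcar -> hcar;
  hip : hcar -> hcar -> C;   (* linear in the 1st, conjugate-linear in the 2nd argument *)
  hadd_assoc : forall x y z, hadd x (hadd y z) = hadd (hadd x y) z;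
  hadd_comm : forall x y, hadd x y = hadd y x;
  hadd_zero : forall x, hadd x hzero = x;
  hadd_opp : forall x, hadd x (hopp x) = hzero;
  hscal_one : forall x, hscal C1 x = x;
  hscal_assoc : forall a b x, hscal a (hscal b x) = hscal (Cmul a b) x;
  hscal_addv : forall a x y, hscal a (hadd x y) = hadd (hscal a x) (hscal a y);
  hscal_adds : forall a b x, hscal (Cadd a b) x = hadd (hscal a x) (hscal b x);
  hip_conj : forall x y, hip y x = Cconj (hip x y);
  hip_add : forall x y z, hip (hadd x y) z = Cadd (hip x z) (hip y z);
  hip_scal : forall a x y, hip (hscal a x) y = Cmul a (hip x y);
  hip_pos : forall x, 0 <= Re (hip x x);
  hip_def : forall x, Re (hip x x) = 0 -> x = hzero;
  hcomplete : forall u : nat -> hcar,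
    (forall eps, 0 < eps -> exists N, forall m n, (N <= m)%nat -> (N <= n)%nat ->
        sqrt (Re (hip (hadd (u m) (hopp (u n))) (hadd (u m) (hopp (u n))))) < eps) ->
    exists l, forall eps, 0 < eps -> exists N, forall n, (N <= n)%nat ->
        sqrt (Re (hip (hadd (u n) (hopp l)) (hadd (u n) (hopp l)))) < eps
}.
Arguments hzero {h}. Arguments hadd {h}. Arguments hopp {h}.
Arguments hscal {h}. Arguments hip {h}.

Section Ops.
Context {H : Hilbert}.

Definition hsub (x y : H) : H := hadd x (hopp y).
Definition hnorm (x : H) : R := sqrt (Re (hip x x)).

Definition converges (u : nat -> H) (l : H) : Prop :=
  forall eps, 0 < eps -> exists N, forall n, (N <= n)%nat -> hnorm (hsub (u n) l) < eps.

Record op := mkOp { dom : H -> Prop; app : H -> H }.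

Definition op_linear (A : op) : Prop :=
  dom A hzero /\
  (forall x y, dom A x -> dom A y -> dom A (hadd x y) /\ app A (hadd x y) = hadd (app A x) (app A y)) /\
  (forall a x, dom A x -> dom A (hscal a x) /\ app A (hscal a x) = hscal a (app A x)).

Definition dense (P : H -> Prop) : Prop :=
  forall x eps, 0 < eps -> exists y, P y /\ hnorm (hsub x y) < eps.

Definition densely_defined (A : op) : Prop := op_linear A /\ dense (dom A).

Definition closed_op (A : op) : Prop :=
  forall (u : nat -> H) x y, (forall n, dom A (u n)) -> converges u x ->
    converges (fun n => app A (u n)) y -> dom A x /\ app A x = y.

Definition adj (A : op) : op :=
  mkOp (fun eta => exists zeta, forall xi, dom A xi -> hip (app A xi) eta = hip xi zeta)
       (fun eta => epsilon (inhabits hzero)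
          (fun zeta => forall xi, dom A xi -> hip (app A xi) eta = hip xi zeta)).

Definition op_eq (A B : op) : Prop :=
  (forall x, dom A x <-> dom B x) /\ (forall x, dom A x -> app A x = app B x).

Definition self_adjoint (A : op) : Prop := densely_defined A /\ op_eq A (adj A).

Definition lin_map {H' : Hilbert} (f : H -> H') : Prop :=
  (forall x y, f (hadd x y) = hadd (f x) (f y)) /\ (forall a x, f (hscal a x) = hscal a (f x)).

Definition bounded (f : H -> H) : Prop :=
  lin_map f /\ exists M, forall x, hnorm (f x) <= M * hnorm x.

Definition symmetric (f : H -> H) : Prop := forall x y, hip (f x) y = hip x (f y).

Definition bounded_metric (G : H -> H) : Prop :=
  bounded G /\ symmetric G /\ (forall x, x <> hzero -> 0 < Re (hip (G x) x)).

Definition is_pos_sqrt (G S : H -> H) : Prop :=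
  bounded S /\ symmetric S /\ (forall x, 0 <= Re (hip (S x) x)) /\ (forall x, S (S x) = G x).

Definition inv_op (f : H -> H) : op :=
  mkOp (fun y => exists x, f x = y) (fun y => epsilon (inhabits hzero) (fun x => f x = y)).

Definition image {H' : Hilbert} (f : H -> H') (P : H -> Prop) : H' -> Prop :=
  fun y => exists x, P x /\ f x = y.

End Ops.

Arguments op : clear implicits.

(* (K, J) is a completion of H w.r.t. <xi, eta>_G = <S xi, S eta> (S = G^{1/2}) *)
Definition is_G_completion {H K : Hilbert} (S : H -> H) (J : H -> K) : Prop :=
  lin_map J /\ (forall x y, hip (J x) (J y) = hip (S x) (S y)) /\ dense (fun k => exists x, J x = k).

(* the operator A, viewed as an operator in the completion K with domain J(D(A)) *)
Definition op_in {H K : Hilbert} (J : H -> K) (A : op H) : op K :=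
  mkOp (image J (dom A))
       (fun k => J (app A (epsilon (inhabits hzero) (fun x => dom A x /\ J x = k)))).

Definition conj_op {H : Hilbert} (S : H -> H) (A : op H) : op H :=
  mkOp (image S (dom A)) (fun y => S (app A (app (inv_op S) y))).

Definition cond_i {H : Hilbert} (G : H -> H) (A : op H) : Prop :=
  (forall y, image G (dom A) y <-> dom (adj A) y) /\
  (forall xi, dom A xi -> app (adj A) (G xi) = G (app A xi)).

Definition cond_ii {H : Hilbert} (S : H -> H) (A : op H) : Prop :=
  self_adjoint (conj_op S A).

Definition cond_iii {H K : Hilbert} (J : H -> K) (A : op H) : Prop :=
  self_adjoint (op_in J A).

Definition cond_iv {H : Hilbert} (G : H -> H) (A : op H) : Prop :=
  (forall y, image G (dom A) y <-> (dom (adj A) y /\ dom (inv_op G) (app (adj A) y))) /\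
  (forall xi, dom A xi -> app (adj A) (G xi) = G (app A xi)).

From Pilot Require Import Defs.
From Stdlib Require Import Reals Classical ClassicalEpsilon Lra Lia.
Open Scope R_scope.

Arguments hadd_assoc {h}. Arguments hadd_comm {h}. Arguments hadd_zero {h}.
Arguments hadd_opp {h}. Arguments hscal_one {h}. Arguments hscal_assoc {h}.
Arguments hscal_addv {h}. Arguments hscal_adds {h}. Arguments hip_conj {h}.
Arguments hip_add {h}. Arguments hip_scal {h}. Arguments hip_pos {h}. Arguments hip_def {h}.

(* Let [B = G^{1/2} A G^{-1/2}] on [G^{1/2} D(A)] and let [T] be [A] acting in [H(G)] on
   [J(D(A))], so that [B (G^{1/2} x) = G^{1/2} (A x)] and [T (J x) = J (A x)]. Since
   [<J x, J y> = <G^{1/2} x, G^{1/2} y> = <G x, y>], the symmetry of [A] with respect to [G],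
   of [B] and of [T] are the same statement, and (i) => (ii) follows by computing [B^*].
   For the other implications the adjoint domains are controlled by one analytic fact: a
   self-adjoint operator [B] has [R(B - i) = H]. Under (ii) this range lies in [R(G^{1/2})],
   under (iii) in [J(H)]; hence [G^{1/2}] and [J] are onto and [G] is invertible, which lets one
   pull elements of [D(T^* )], resp. [D(A^* )], back into [J(D(A))], resp. [G D(A)].
   [R(B - i)] is closed because [|(B - i) u|^2 = |B u|^2 + |u|^2] and [B] is closed, and dense
   by the projection theorem because [-i] is not an eigenvalue of [B].
   Finally (iv) => (i) is immediate when [R(A^* )] lies in [D(G^{-1})]. *)

Lemma C_ext (a b : Defs.C) : Re a = Re b -> Im a = Im b -> a = b.
Proof. destruct a, b; simpl; intros -> ->; reflexivity. Qed.

Ltac C_ring := apply C_ext; simpl; try ring.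

Definition Cm1 : Defs.C := mkC (-1) 0.
Definition Ci : Defs.C := mkC 0 1.
Definition Cmi : Defs.C := mkC 0 (-1).
Definition Creal (r : R) : Defs.C := mkC r 0.

Section VectorSpace.
Context {X : Hilbert}.
Implicit Types x y z : X.

Lemma hadd_0l x : hadd hzero x = x.
Proof. rewrite hadd_comm; apply hadd_zero. Qed.

Lemma hadd_cancel_l x y z : hadd x y = hadd x z -> y = z.
Proof.
  intro E.
  assert (E' : hadd (hopp x) (hadd x y) = hadd (hopp x) (hadd x z)) by (rewrite E; reflexivity).
  rewrite !hadd_assoc, (hadd_comm (hopp x) x), hadd_opp, !hadd_0l in E'. exact E'.
Qed.

Lemma hscal_0l x : hscal Defs.C0 x = hzero.
Proof.
  apply (hadd_cancel_l (hscal Defs.C0 x)).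
  rewrite hadd_zero, <- hscal_adds. f_equal. C_ring.
Qed.

Lemma hopp_hscal x : hopp x = hscal Cm1 x.
Proof.
  apply (hadd_cancel_l x). rewrite hadd_opp.
  rewrite <- (hscal_one x) at 1. rewrite <- hscal_adds.
  replace (Cadd Defs.C1 Cm1) with Defs.C0 by C_ring. rewrite hscal_0l. reflexivity.
Qed.

Lemma hopp_hadd x y : hopp (hadd x y) = hadd (hopp x) (hopp y).
Proof. rewrite !hopp_hscal. apply hscal_addv. Qed.

Lemma hopp_involutive x : hopp (hopp x) = x.
Proof. rewrite !hopp_hscal, hscal_assoc. rewrite <- (hscal_one x) at 2. f_equal. C_ring. Qed.

Lemma hsub_diag x : hsub x x = hzero.
Proof. apply hadd_opp. Qed.

Lemma hsub_eq0 x y : hsub x y = hzero -> x = y.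
Proof.
  unfold hsub. intro E.
  rewrite <- (hadd_zero x), <- (hadd_opp y), (hadd_comm y), hadd_assoc, E, hadd_0l.
  reflexivity.
Qed.

Lemma hsub_swap x y : hsub y x = hopp (hsub x y).
Proof. unfold hsub. rewrite hopp_hadd, hopp_involutive, hadd_comm. reflexivity. Qed.

Lemma hsub_chain x y z : hsub x z = hadd (hsub x y) (hsub y z).
Proof.
  unfold hsub. rewrite <- hadd_assoc. f_equal.
  rewrite hadd_assoc, (hadd_comm (hopp y)), hadd_opp, hadd_0l. reflexivity.
Qed.

Lemma hadd_hadd_swap (a b c d : X) : hadd (hadd a b) (hadd c d) = hadd (hadd a c) (hadd b d).
Proof. rewrite <- !hadd_assoc. f_equal. rewrite !hadd_assoc. f_equal. apply hadd_comm. Qed.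

Lemma hscal_comm a b x : hscal a (hscal b x) = hscal b (hscal a x).
Proof. rewrite !hscal_assoc. f_equal. C_ring. Qed.

End VectorSpace.

Section InnerProduct.
Context {X : Hilbert}.
Implicit Types x y z : X.

Lemma hip_0l y : hip (@hzero X) y = Defs.C0.
Proof. rewrite <- (hscal_0l hzero), hip_scal. C_ring. Qed.

Lemma hip_0r x : hip x (@hzero X) = Defs.C0.
Proof. rewrite hip_conj, hip_0l. C_ring. Qed.

Lemma hip_addr x y z : hip x (hadd y z) = Cadd (hip x y) (hip x z).
Proof. rewrite hip_conj, hip_add, (hip_conj y x), (hip_conj z x). C_ring. Qed.

Lemma hip_scalr a x y : hip x (hscal a y) = Cmul (Cconj a) (hip x y).
Proof. rewrite hip_conj, hip_scal, (hip_conj y x). C_ring. Qed.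

Lemma hip_oppl x y : hip (hopp x) y = Cmul Cm1 (hip x y).
Proof. rewrite hopp_hscal, hip_scal. reflexivity. Qed.

Lemma hip_oppr x y : hip x (hopp y) = Cmul Cm1 (hip x y).
Proof. rewrite hopp_hscal, hip_scalr. C_ring. Qed.

Lemma Im_hip_diag x : Im (hip x x) = 0.
Proof. pose proof (f_equal Im (hip_conj x x)) as E. simpl in E. lra. Qed.

Lemma Re_hip_sym x y : Re (hip y x) = Re (hip x y).
Proof. rewrite hip_conj. reflexivity. Qed.

Lemma Re_hip_addl x y z : Re (hip (hadd x y) z) = Re (hip x z) + Re (hip y z).
Proof. rewrite hip_add. reflexivity. Qed.

Lemma Re_hip_addr x y z : Re (hip x (hadd y z)) = Re (hip x y) + Re (hip x z).
Proof. rewrite hip_addr. reflexivity. Qed.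

Lemma Re_hip_oppl x y : Re (hip (hopp x) y) = - Re (hip x y).
Proof. rewrite hip_oppl. simpl. ring. Qed.

Lemma Re_hip_oppr x y : Re (hip x (hopp y)) = - Re (hip x y).
Proof. rewrite hip_oppr. simpl. ring. Qed.

Lemma Re_hip_reall r x y : Re (hip (hscal (Creal r) x) y) = r * Re (hip x y).
Proof. rewrite hip_scal. simpl. ring. Qed.

Lemma Re_hip_realr r x y : Re (hip x (hscal (Creal r) y)) = r * Re (hip x y).
Proof. rewrite hip_scalr. simpl. ring. Qed.

Definition sqnorm x : R := Re (hip x x).

Lemma sqnorm_ge0 x : 0 <= sqnorm x.
Proof. apply hip_pos. Qed.

Lemma sqnorm_eq0 x : sqnorm x = 0 -> x = hzero.
Proof. apply hip_def. Qed.

Lemma sqnorm_add x y : sqnorm (hadd x y) = sqnorm x + sqnorm y + 2 * Re (hip x y).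
Proof. unfold sqnorm. rewrite Re_hip_addl, !Re_hip_addr, (Re_hip_sym x y). ring. Qed.

Lemma sqnorm_scal a x : sqnorm (hscal a x) = (Re a * Re a + Im a * Im a) * sqnorm x.
Proof. unfold sqnorm. rewrite hip_scal, hip_scalr. simpl. rewrite Im_hip_diag. ring. Qed.

Lemma sqnorm_opp x : sqnorm (hopp x) = sqnorm x.
Proof. rewrite hopp_hscal, sqnorm_scal. simpl. ring. Qed.

Lemma sqnorm_sub x y : sqnorm (hsub x y) = sqnorm x + sqnorm y - 2 * Re (hip x y).
Proof. unfold hsub. rewrite sqnorm_add, sqnorm_opp, Re_hip_oppr. ring. Qed.

Lemma hnorm_sqr x : hnorm x * hnorm x = sqnorm x.
Proof. apply sqrt_sqrt, sqnorm_ge0. Qed.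

Lemma hnorm_ge0 x : 0 <= hnorm x.
Proof. apply sqrt_pos. Qed.

Lemma hnorm_eq0 x : hnorm x = 0 -> x = hzero.
Proof. intro E. apply sqnorm_eq0. rewrite <- hnorm_sqr, E. ring. Qed.

Lemma hnorm_0 : hnorm (@hzero X) = 0.
Proof. unfold hnorm. rewrite hip_0l. apply sqrt_0. Qed.

Lemma hnorm_hopp x : hnorm (hopp x) = hnorm x.
Proof. unfold hnorm. fold (sqnorm (hopp x)). rewrite sqnorm_opp. reflexivity. Qed.

Lemma hnorm_hsub_sym x y : hnorm (hsub y x) = hnorm (hsub x y).
Proof. rewrite hsub_swap, hnorm_hopp. reflexivity. Qed.

Lemma Re_hip_le x y : Re (hip x y) <= hnorm x * hnorm y.
Proof.
  destruct (Req_dec (sqnorm y) 0) as [Hy|Hy].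
  - apply sqnorm_eq0 in Hy. subst y. rewrite hip_0r. simpl.
    apply Rmult_le_pos; apply hnorm_ge0.
  - assert (Hy' : 0 < sqnorm y) by (pose proof (sqnorm_ge0 y); lra).
    set (c := Re (hip x y)).
    (* expand [0 <= |x - (c / |y|^2) y|^2] *)
    assert (Q : c * c <= sqnorm x * sqnorm y).
    { pose proof (sqnorm_ge0 (hsub x (hscal (Creal (c / sqnorm y)) y))) as P.
      rewrite sqnorm_sub, sqnorm_scal, Re_hip_realr in P. simpl in P. fold c in P.
      apply (Rmult_le_compat_r (sqnorm y)) in P; [|lra].
      replace ((sqnorm x + (c / sqnorm y * (c / sqnorm y) + 0 * 0) * sqnorm y
                - 2 * (c / sqnorm y * c)) * sqnorm y)
        with (sqnorm x * sqnorm y - c * c) in P by (field; lra).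
      lra. }
    destruct (Rle_dec c 0) as [Hc|Hc].
    + pose proof (Rmult_le_pos _ _ (hnorm_ge0 x) (hnorm_ge0 y)). lra.
    + apply Rsqr_incr_0_var; [|apply Rmult_le_pos; apply hnorm_ge0].
      unfold Rsqr. replace (hnorm x * hnorm y * (hnorm x * hnorm y))
        with ((hnorm x * hnorm x) * (hnorm y * hnorm y)) by ring.
      rewrite !hnorm_sqr. exact Q.
Qed.

Lemma Rabs_Re_hip_le x y : Rabs (Re (hip x y)) <= hnorm x * hnorm y.
Proof.
  apply Rabs_le. split; [|apply Re_hip_le].
  pose proof (Re_hip_le x (hopp y)) as P. rewrite Re_hip_oppr, hnorm_hopp in P. lra.
Qed.

Lemma Rabs_Im_hip_le x y : Rabs (Im (hip x y)) <= hnorm x * hnorm y.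
Proof.
  pose proof (Rabs_Re_hip_le x (hscal Ci y)) as P.
  unfold hnorm at 2 in P. fold (sqnorm (hscal Ci y)) in P.
  rewrite hip_scalr, sqnorm_scal in P. simpl in P.
  replace ((0 * 0 + 1 * 1) * sqnorm y) with (sqnorm y) in P by ring.
  replace (0 * Re (hip x y) - - (1) * Im (hip x y)) with (Im (hip x y)) in P by ring.
  exact P.
Qed.

Lemma hnorm_triangle x y : hnorm (hadd x y) <= hnorm x + hnorm y.
Proof.
  apply Rsqr_incr_0_var; [|pose proof (hnorm_ge0 x); pose proof (hnorm_ge0 y); lra].
  unfold Rsqr. rewrite hnorm_sqr, sqnorm_add, <- (hnorm_sqr x), <- (hnorm_sqr y).
  pose proof (Re_hip_le x y). nra.
Qed.

Lemma hnorm_hsub_triangle x y z : hnorm (hsub x z) <= hnorm (hsub x y) + hnorm (hsub y z).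
Proof. rewrite (hsub_chain x y z). apply hnorm_triangle. Qed.

Lemma Re_hip_hsubr x y z : Re (hip x (hsub y z)) = Re (hip x y) - Re (hip x z).
Proof. unfold hsub. rewrite Re_hip_addr, Re_hip_oppr. ring. Qed.

Lemma Im_hip_hsubr x y z : Im (hip x (hsub y z)) = Im (hip x y) - Im (hip x z).
Proof. unfold hsub. rewrite hip_addr, hip_oppr. simpl. ring. Qed.

End InnerProduct.

Ltac Re_expand := unfold sqnorm, hsub in *;
  repeat progress rewrite ?Re_hip_addl, ?Re_hip_addr, ?Re_hip_oppl, ?Re_hip_oppr,
    ?Re_hip_reall, ?Re_hip_realr in *.

Lemma inv_succ_pos n : 0 < / (INR n + 1).
Proof. apply Rinv_0_lt_compat. pose proof (pos_INR n); lra. Qed.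

Lemma inv_succ_lt eps : 0 < eps -> exists N, forall n, (N <= n)%nat -> / (INR n + 1) < eps.
Proof.
  intro He. destruct (archimed_cor1 eps He) as [N [HN HN0]]. exists N. intros n Hn.
  apply le_INR in Hn. apply lt_INR in HN0. simpl in HN0.
  eapply Rlt_trans; [|exact HN]. apply Rinv_lt_contravar; nra.
Qed.

Lemma Rle_quadratic_eq0 r q : 0 <= q -> (forall t, 2 * t * r <= t * t * q) -> r = 0.
Proof.
  intros Hq Ht. specialize (Ht (r / (q + 1))).
  assert (Hq1 : 0 < q + 1) by lra.
  apply (Rmult_le_compat_r ((q + 1) * (q + 1))) in Ht; [|nra].
  replace (2 * (r / (q + 1)) * r * ((q + 1) * (q + 1))) with (2 * r * r * (q + 1)) in Ht
    by (field; lra).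
  replace (r / (q + 1) * (r / (q + 1)) * q * ((q + 1) * (q + 1))) with (r * r * q) in Ht
    by (field; lra).
  nra.
Qed.

Lemma pythagoras_bounds a b c : 0 <= a -> 0 <= b -> 0 <= c -> c * c = a * a + b * b ->
  a <= c /\ b <= c /\ c <= a + b.
Proof. intros. repeat split; nra. Qed.

Lemma Un_cv_const c : Un_cv (fun _ => c) c.
Proof. intros eps He. exists O. intros n _. unfold Rdist. rewrite Rminus_diag, Rabs_R0. lra. Qed.

Lemma minimizing_seq {T : Type} (f : T -> R) (Q : T -> Prop) :
  (exists t, Q t) -> (forall t, Q t -> 0 <= f t) ->
  exists d u, (forall t, Q t -> d <= f t) /\ (forall n : nat, Q (u n)) /\
    Un_cv (fun n => f (u n)) d.
Proof.
  intros [t0 Qt0] Hpos.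
  set (E := fun r => exists t, Q t /\ r = - f t).
  destruct (completeness E) as [L [HLub HLleast]].
  - exists 0. intros r [t [Qt ->]]. specialize (Hpos t Qt). lra.
  - exists (- f t0), t0. auto.
  - assert (Hlow : forall t, Q t -> - L <= f t).
    { intros t Qt. assert (Et : E (- f t)) by (exists t; auto). specialize (HLub _ Et). lra. }
    assert (Happ : forall n : nat, exists t, Q t /\ f t < - L + / (INR n + 1)).
    { intro n. apply NNPP. intro Hn.
      assert (Hub : is_upper_bound E (L - / (INR n + 1))).
      { intros r [t [Qt ->]]. apply Rnot_lt_le. intro Hlt. apply Hn. exists t. split; auto. lra. }
      specialize (HLleast _ Hub). pose proof (inv_succ_pos n). lra. }
    destruct (choice _ Happ) as [u Hu].
    exists (- L), u. split; [exact Hlow|]. split; [intro n; apply Hu|].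
    intros eps He. destruct (inv_succ_lt eps He) as [N HN]. exists N. intros n Hn.
    destruct (Hu n) as [Qn Hn']. specialize (Hlow _ Qn). specialize (HN n Hn).
    unfold Rdist. rewrite Rabs_right; lra.
Qed.

Section Sequences.
Context {X Y : Hilbert}.

Definition cauchy (u : nat -> X) : Prop :=
  forall eps, 0 < eps -> exists N, forall m n, (N <= m)%nat -> (N <= n)%nat ->
    hnorm (hsub (u m) (u n)) < eps.

Definition range (f : X -> Y) : Y -> Prop := fun y => exists x, f x = y.

Definition onto (f : X -> Y) : Prop := forall y, exists x, f x = y.

End Sequences.

Section Limits.
Context {X Y Z : Hilbert}.


Lemma cauchy_converges (u : nat -> X) : cauchy u -> exists l, converges u l.
Proof. exact (hcomplete X u). Qed.

Lemma converges_unique (u : nat -> X) a b : converges u a -> converges u b -> a = b.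
Proof.
  intros Ha Hb. apply hsub_eq0, hnorm_eq0.
  apply Rle_antisym; [|apply hnorm_ge0].
  apply Rle_plus_epsilon. intros eta He.
  destruct (Ha (eta / 2)) as [N1 H1]; [lra|]. destruct (Hb (eta / 2)) as [N2 H2]; [lra|].
  specialize (H1 (N1 + N2)%nat ltac:(lia)). specialize (H2 (N1 + N2)%nat ltac:(lia)).
  pose proof (hnorm_hsub_triangle a (u (N1 + N2)%nat) b) as T.
  rewrite (hnorm_hsub_sym (u (N1 + N2)%nat) a) in T. lra.
Qed.

Lemma converges_cauchy (u : nat -> X) l : converges u l -> cauchy u.
Proof.
  intros Hu eps He. destruct (Hu (eps / 2)) as [N HN]; [lra|]. exists N. intros m n Hm Hn.
  pose proof (hnorm_hsub_triangle (u m) l (u n)) as T. rewrite (hnorm_hsub_sym (u n) l) in T.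
  pose proof (HN m Hm). pose proof (HN n Hn). lra.
Qed.

Lemma cauchy_le (u : nat -> X) (v : nat -> Y) :
  (forall m n, hnorm (hsub (u m) (u n)) <= hnorm (hsub (v m) (v n))) -> cauchy v -> cauchy u.
Proof.
  intros Hle Hv eps He. destruct (Hv eps He) as [N HN]. exists N. intros m n Hm Hn.
  eapply Rle_lt_trans; [apply Hle|apply HN; auto].
Qed.

Lemma converges_le (a : nat -> X) la (b : nat -> Y) lb :
  (forall n, hnorm (hsub (a n) la) <= hnorm (hsub (b n) lb)) ->
  converges b lb -> converges a la.
Proof.
  intros Hle Hb eps He. destruct (Hb eps He) as [N HN]. exists N. intros n Hn.
  eapply Rle_lt_trans; [apply Hle|apply HN; auto].
Qed.

Lemma converges_le_sum (a : nat -> X) la (b : nat -> Y) lb (c : nat -> Z) lc :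
  (forall n, hnorm (hsub (a n) la) <= hnorm (hsub (b n) lb) + hnorm (hsub (c n) lc)) ->
  converges b lb -> converges c lc -> converges a la.
Proof.
  intros Hle Hb Hc eps He.
  destruct (Hb (eps / 2)) as [N1 H1]; [lra|]. destruct (Hc (eps / 2)) as [N2 H2]; [lra|].
  exists (N1 + N2)%nat. intros n Hn.
  specialize (Hle n). specialize (H1 n ltac:(lia)). specialize (H2 n ltac:(lia)). lra.
Qed.

Lemma approx_seq {T : Type} (f : T -> X) (Q : T -> Prop) x :
  (forall eps, 0 < eps -> exists t, Q t /\ hnorm (hsub x (f t)) < eps) ->
  exists u, (forall n, Q (u n)) /\ converges (fun n => f (u n)) x.
Proof.
  intro Happ.
  destruct (choice (fun (n : nat) t => Q t /\ hnorm (hsub x (f t)) < / (INR n + 1))) as [u Hu].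
  { intro n. apply Happ, inv_succ_pos. }
  exists u. split; [intro n; apply Hu|].
  intros eps He. destruct (inv_succ_lt eps He) as [N HN]. exists N. intros n Hn.
  rewrite hnorm_hsub_sym. specialize (HN n Hn). destruct (Hu n) as [_ Hn']. lra.
Qed.

Lemma Un_cv_lipschitz (f : X -> R) M (u : nat -> X) l :
  (forall y z, Rabs (f y - f z) <= M * hnorm (hsub y z)) ->
  converges u l -> Un_cv (fun n => f (u n)) (f l).
Proof.
  intros Hf Hu eps He.
  assert (HM : 0 < Rabs M + 1) by (pose proof (Rabs_pos M); lra).
  destruct (Hu (eps / (Rabs M + 1))) as [N HN]; [apply Rdiv_lt_0_compat; lra|].
  exists N. intros n Hn. unfold Rdist.
  specialize (HN n Hn). specialize (Hf (u n) l).
  pose proof (hnorm_ge0 (hsub (u n) l)). pose proof (Rle_abs M). pose proof (Rabs_pos M).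
  assert (eps / (Rabs M + 1) * (Rabs M + 1) = eps) by (field; lra).
  nra.
Qed.

Lemma Re_hip_lipschitzr (c y z : X) :
  Rabs (Re (hip c y) - Re (hip c z)) <= hnorm c * hnorm (hsub y z).
Proof. rewrite <- Re_hip_hsubr. apply Rabs_Re_hip_le. Qed.

Lemma Im_hip_lipschitzr (c y z : X) :
  Rabs (Im (hip c y) - Im (hip c z)) <= hnorm c * hnorm (hsub y z).
Proof. rewrite <- Im_hip_hsubr. apply Rabs_Im_hip_le. Qed.

Lemma hip_lim (a b : nat -> X) la lb c d :
  converges a la -> converges b lb -> (forall n, hip c (a n) = hip d (b n)) ->
  hip c la = hip d lb.
Proof.
  intros Ha Hb E. apply C_ext.
  - apply (UL_sequence (fun n => Re (hip c (a n)))).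
    + exact (Un_cv_lipschitz _ _ _ _ (Re_hip_lipschitzr c) Ha).
    + apply (Un_cv_ext (fun n => Re (hip d (b n)))); [intro n; rewrite E; reflexivity|].
      exact (Un_cv_lipschitz _ _ _ _ (Re_hip_lipschitzr d) Hb).
  - apply (UL_sequence (fun n => Im (hip c (a n)))).
    + exact (Un_cv_lipschitz _ _ _ _ (Im_hip_lipschitzr c) Ha).
    + apply (Un_cv_ext (fun n => Im (hip d (b n)))); [intro n; rewrite E; reflexivity|].
      exact (Un_cv_lipschitz _ _ _ _ (Im_hip_lipschitzr d) Hb).
Qed.

End Limits.

Section Density.
Context {X Y Z : Hilbert}.

Lemma onto_of_same_distances (f : X -> Y) (g : X -> Z) :
  (forall x y, hnorm (hsub (f x) (f y)) = hnorm (hsub (g x) (g y))) ->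
  dense (range g) -> onto f -> onto g.
Proof.
  intros Hd Hg Hf z.
  destruct (approx_seq g (fun _ => True) z) as [xs [_ Hxs]].
  { intros eps He. destruct (Hg z eps He) as [w [[x <-] Hx]]. exists x. auto. }
  destruct (cauchy_converges (fun n => f (xs n))) as [y Hy].
  { apply (cauchy_le _ (fun n => g (xs n))); [intros; rewrite Hd; lra|].
    exact (converges_cauchy _ _ Hxs). }
  destruct (Hf y) as [x <-]. exists x.
  apply (converges_unique (fun n => g (xs n))); [|exact Hxs].
  apply (converges_le _ _ (fun n => f (xs n)) (f x)); [intro n; rewrite Hd; lra|exact Hy].
Qed.

Lemma dense_image_lipschitz (f : X -> Y) (P : X -> Prop) M :
  (forall x y, hnorm (hsub (f x) (f y)) <= M * hnorm (hsub x y)) ->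
  dense P -> dense (range f) -> dense (image f P).
Proof.
  intros Hf HP Hr y eps He.
  destruct (Hr y (eps / 2)) as [w [[z <-] Hz]]; [lra|].
  assert (HM : 0 < Rabs M + 1) by (pose proof (Rabs_pos M); lra).
  destruct (HP z (eps / 2 / (Rabs M + 1))) as [a [Pa Ha]]; [apply Rdiv_lt_0_compat; lra|].
  exists (f a). split; [exists a; auto|].
  specialize (Hf z a). pose proof (hnorm_hsub_triangle y (f z) (f a)).
  pose proof (hnorm_ge0 (hsub z a)). pose proof (Rle_abs M). pose proof (Rabs_pos M).
  assert (eps / 2 / (Rabs M + 1) * (Rabs M + 1) = eps / 2) by (field; lra).
  nra.
Qed.

End Density.

Section LinearMaps.
Context {X Y : Hilbert}.

Lemma lin_map_0 (f : X -> Y) : lin_map f -> f hzero = hzero.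
Proof. intros [_ Hs]. rewrite <- (hscal_0l (@hzero X)), Hs, hscal_0l. reflexivity. Qed.

Lemma lin_map_hsub (f : X -> Y) x y : lin_map f -> f (hsub x y) = hsub (f x) (f y).
Proof. intros [Ha Hs]. unfold hsub. rewrite Ha, !hopp_hscal, Hs. reflexivity. Qed.

Lemma lin_map_inj (f : X -> Y) : lin_map f -> (forall w, f w = hzero -> w = hzero) ->
  forall x y, f x = f y -> x = y.
Proof.
  intros Hf Hker x y E. apply hsub_eq0, Hker.
  rewrite lin_map_hsub, E by exact Hf. apply hsub_diag.
Qed.

End LinearMaps.

Section Operators.
Context {X : Hilbert}.
Implicit Types (B : op X) (x y z u v : X).

Lemma op_app0 B : op_linear B -> app B hzero = hzero.
Proof.
  intros [D0 [Dadd _]]. destruct (Dadd _ _ D0 D0) as [_ E].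
  rewrite hadd_zero in E. apply (hadd_cancel_l (app B hzero)). rewrite hadd_zero. symmetry. exact E.
Qed.

Lemma op_sub B u v : op_linear B -> dom B u -> dom B v ->
  dom B (hsub u v) /\ app B (hsub u v) = hsub (app B u) (app B v).
Proof.
  intros [_ [Dadd Dscal]] Hu Hv. unfold hsub. rewrite !hopp_hscal.
  destruct (Dscal Cm1 v Hv) as [D1 E1]. destruct (Dadd _ _ Hu D1) as [D2 E2].
  rewrite E2, E1. auto.
Qed.

Definition op_shift B (c : Defs.C) : op X :=
  mkOp (dom B) (fun u => hadd (app B u) (hscal c u)).

Lemma op_shift_linear B c : op_linear B -> op_linear (op_shift B c).
Proof.
  intros [D0 [Dadd Dscal]]. split; [exact D0|split]; simpl.
  - intros x y Hx Hy. destruct (Dadd x y Hx Hy) as [D E].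
    rewrite E, hscal_addv, hadd_hadd_swap. auto.
  - intros a x Hx. destruct (Dscal a x Hx) as [D E].
    rewrite E, hscal_addv, hscal_comm. auto.
Qed.

Lemma dense_orth_eq0 (P : X -> Prop) w :
  dense P -> (forall x, P x -> hip x w = Defs.C0) -> w = hzero.
Proof.
  intros Hd Horth. apply hnorm_eq0.
  apply Rle_antisym; [|apply hnorm_ge0]. apply Rnot_lt_le. intro Hw.
  destruct (Hd w (hnorm w / 2)) as [x [Px Hx]]; [lra|].
  (* [|w|^2 = Re <w - x, w> <= |w - x| |w|] *)
  pose proof (Re_hip_le (hsub w x) w) as C.
  unfold hsub in C. rewrite Re_hip_addl, Re_hip_oppl, (Horth x Px) in C. simpl in C.
  fold (sqnorm w) in C. rewrite <- hnorm_sqr in C.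
  pose proof (hnorm_ge0 (hsub w x)). unfold hsub in *. nra.
Qed.

Lemma adj_hip B y : dom (adj B) y ->
  forall x, dom B x -> hip (app B x) y = hip x (app (adj B) y).
Proof.
  intro Hy.
  exact (epsilon_spec (inhabits hzero)
    (fun zeta => forall xi, dom B xi -> hip (app B xi) y = hip xi zeta) Hy).
Qed.

Lemma adj_of_hip B y z : densely_defined B ->
  (forall x, dom B x -> hip (app B x) y = hip x z) -> dom (adj B) y /\ app (adj B) y = z.
Proof.
  intros [_ Hd] Hz.
  assert (D : dom (adj B) y) by (exists z; exact Hz).
  split; [exact D|]. symmetry. apply hsub_eq0, (dense_orth_eq0 (dom B)); [exact Hd|].
  intros x Px. unfold hsub. rewrite hip_addr, hip_oppr, <- (adj_hip B y D x Px), Hz by exact Px.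
  C_ring.
Qed.

Lemma self_adjoint_adj_dom B y : self_adjoint B -> dom (adj B) y -> dom B y.
Proof. intros [_ [Hd _]]. apply Hd. Qed.

Lemma self_adjoint_hip B : self_adjoint B ->
  forall x y, dom B x -> dom B y -> hip (app B x) y = hip x (app B y).
Proof.
  intros [_ [Hd Ha]] x y Hx Hy.
  assert (Dy : dom (adj B) y) by (apply Hd; exact Hy).
  rewrite (adj_hip B y Dy x Hx), (Ha y Hy). reflexivity.
Qed.

Lemma self_adjoint_intro B : densely_defined B ->
  (forall x y, dom B x -> dom B y -> hip (app B x) y = hip x (app B y)) ->
  (forall y, dom (adj B) y -> dom B y) -> self_adjoint B.
Proof.
  intros Bdd Bsym Bmax. split; [exact Bdd|split].
  - intro y. split; [|apply Bmax].
    intro Dy. apply (adj_of_hip B y (app B y) Bdd). intros x Dx. apply Bsym; assumption.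
  - intros y Dy. symmetry. apply (adj_of_hip B y (app B y) Bdd).
    intros x Dx. apply Bsym; assumption.
Qed.

Lemma self_adjoint_closed B : self_adjoint B -> closed_op B.
Proof.
  intros Bsa u x y Du Hu Hv.
  assert (Dx : dom (adj B) x /\ app (adj B) x = y).
  { apply adj_of_hip; [apply Bsa|]. intros z Dz.
    apply (hip_lim u (fun n => app B (u n))); [exact Hu|exact Hv|].
    intro n. apply self_adjoint_hip; auto. }
  destruct Dx as [Dx Ex]. apply self_adjoint_adj_dom in Dx; [|exact Bsa].
  split; [exact Dx|]. rewrite <- Ex. apply (proj2 (proj2 Bsa)), Dx.
Qed.

End Operators.

Section Projection.
Context {X : Hilbert}.
Implicit Types (x y m p : X).

Lemma sqnorm_parallelogram x m m' :
  sqnorm (hsub m m') = 2 * sqnorm (hsub x m) + 2 * sqnorm (hsub x m')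
    - 4 * sqnorm (hsub x (hscal (Creal (1 / 2)) (hadd m m'))).
Proof.
  Re_expand. rewrite (Re_hip_sym m x), (Re_hip_sym m' x), (Re_hip_sym m' m). field.
Qed.

Lemma sqnorm_hsub_hadd_real x y m t :
  sqnorm (hsub x (hadd y (hscal (Creal t) m))) =
    sqnorm (hsub x y) - 2 * t * (Re (hip m x) - Re (hip m y)) + t * t * sqnorm m.
Proof. Re_expand. rewrite (Re_hip_sym y m), (Re_hip_sym x m). ring. Qed.

Variables (M : X -> Prop) (x : X) (d : R) (u : nat -> X).
Hypothesis M_add : forall m m', M m -> M m' -> M (hadd m m').
Hypothesis M_real : forall r m, M m -> M (hscal (Creal r) m).
Hypothesis d_low : forall m, M m -> d <= sqnorm (hsub x m).
Hypothesis u_in : forall n, M (u n).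
Hypothesis u_min : Un_cv (fun n => sqnorm (hsub x (u n))) d.

Lemma minimizing_seq_cauchy : cauchy u.
Proof.
  intros eps He. destruct (u_min (eps * eps / 4)) as [N HN]; [nra|].
  exists N. intros m n Hm Hn.
  pose proof (sqnorm_parallelogram x (u m) (u n)) as Par.
  pose proof (d_low _ (M_real (1 / 2) _ (M_add _ _ (u_in m) (u_in n)))).
  pose proof (HN m Hm) as Am. pose proof (HN n Hn) as An. unfold Rdist in Am, An.
  apply Rabs_def2 in Am. apply Rabs_def2 in An.
  rewrite <- hnorm_sqr in Par.
  assert (Hsq : hnorm (hsub (u m) (u n)) * hnorm (hsub (u m) (u n)) < eps * eps) by lra.
  pose proof (hnorm_ge0 (hsub (u m) (u n))). nra.
Qed.

(* The limit [p] of a minimizing sequence is a best approximation, so [x - p] is orthogonal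
   to [M]: otherwise moving along some [m] in [M] would decrease the distance below [d]. *)
Lemma minimizing_limit_orth p : converges u p ->
  forall m, M m -> Re (hip m (hsub x p)) = 0.
Proof.
  intros Hp m Mm. rewrite Re_hip_hsubr.
  apply (Rle_quadratic_eq0 _ (sqnorm m)); [apply sqnorm_ge0|]. intro t.
  assert (Hlim : d <= d - 2 * t * (Re (hip m x) - Re (hip m p)) + t * t * sqnorm m).
  { apply (@Rle_cv_lim (fun _ => d)
      (fun n => sqnorm (hsub x (u n)) - 2 * t * (Re (hip m x) - Re (hip m (u n)))
                + t * t * sqnorm m)).
    - intro n. rewrite <- sqnorm_hsub_hadd_real. apply d_low, M_add; [apply u_in|apply M_real, Mm].
    - apply Un_cv_const.
    - apply CV_plus; [apply CV_minus; [exact u_min|]|apply Un_cv_const].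
      apply CV_mult; [apply Un_cv_const|apply CV_minus; [apply Un_cv_const|]].
      exact (Un_cv_lipschitz _ _ _ _ (Re_hip_lipschitzr m) Hp). }
  lra.
Qed.

End Projection.

Lemma dense_of_orth_trivial {X : Hilbert} (M : X -> Prop) :
  M hzero -> (forall x y, M x -> M y -> M (hadd x y)) -> (forall a x, M x -> M (hscal a x)) ->
  (forall z, (forall m, M m -> hip m z = Defs.C0) -> z = hzero) -> dense M.
Proof.
  intros M0 Madd Mscal Morth x eps He.
  assert (Mreal : forall r m, M m -> M (hscal (Creal r) m)) by auto.
  destruct (minimizing_seq (fun m => sqnorm (hsub x m)) M) as [d [u [Hd [Mu Hu]]]].
  - exists hzero. exact M0.
  - intros. apply sqnorm_ge0.
  - destruct (cauchy_converges u) as [p Hp].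
    { exact (minimizing_seq_cauchy M x d u Madd Mreal Hd Mu Hu). }
    assert (Hx : x = p).
    { apply hsub_eq0, Morth. intros m Mm.
      pose proof (minimizing_limit_orth M x d u Madd Mreal Hd Mu Hu p Hp) as Horth.
      pose proof (Horth m Mm) as Re0. pose proof (Horth _ (Mscal Ci m Mm)) as Im0.
      rewrite hip_scal in Im0. simpl in Im0. C_ring; lra. }
    subst p. destruct (Hp eps He) as [N HN]. exists (u N). split; [apply Mu|].
    rewrite hnorm_hsub_sym. apply HN. lia.
Qed.

Section SelfAdjointRange.
Context {X : Hilbert}.
Variable B : op X.
Hypothesis B_sa : self_adjoint B.

Let B_lin : op_linear B := proj1 (proj1 B_sa).

Lemma sqnorm_shift_i u : dom B u ->
  sqnorm (app (op_shift B Cmi) u) = sqnorm (app B u) + sqnorm u.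
Proof.
  intro Du. simpl. rewrite sqnorm_add, sqnorm_scal, hip_scalr. simpl.
  assert (Hreal : Im (hip (app B u) u) = 0).
  { pose proof (f_equal Im (self_adjoint_hip B B_sa u u Du Du)) as E.
    rewrite (hip_conj (app B u) u) in E. simpl in E. lra. }
  rewrite Hreal. ring.
Qed.

Lemma shift_i_norm_bounds u v : dom B u -> dom B v ->
  let w := hsub (app (op_shift B Cmi) u) (app (op_shift B Cmi) v) in
  hnorm (hsub (app B u) (app B v)) <= hnorm w /\ hnorm (hsub u v) <= hnorm w /\
  hnorm w <= hnorm (hsub (app B u) (app B v)) + hnorm (hsub u v).
Proof.
  intros Du Dv w.
  destruct (op_sub B u v B_lin Du Dv) as [Duv Euv].
  destruct (op_sub (op_shift B Cmi) u v (op_shift_linear B Cmi B_lin) Du Dv) as [_ Ew].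
  apply pythagoras_bounds; try apply hnorm_ge0.
  unfold w. rewrite <- Ew, <- Euv, !hnorm_sqr. apply sqnorm_shift_i, Duv.
Qed.

(* An eigenvector of [B] for [-i] would make [<B z, z> = -i |z|^2] non-real. *)
Lemma shift_i_range_dense : dense (image (app (op_shift B Cmi)) (dom B)).
Proof.
  pose proof (op_shift_linear B Cmi B_lin) as [D0 [Dadd Dscal]].
  apply dense_of_orth_trivial.
  - exists hzero. split; [exact D0|apply op_app0, op_shift_linear, B_lin].
  - intros x y [u [Du <-]] [v [Dv <-]]. exists (hadd u v).
    destruct (Dadd u v Du Dv) as [D E]. auto.
  - intros a x [u [Du <-]]. exists (hscal a u).
    destruct (Dscal a u Du) as [D E]. auto.
  - intros z Hz.
    assert (Adj : forall x, dom B x -> hip (app B x) z = hip x (hscal Cmi z)).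
    { intros x Dx. specialize (Hz _ (ex_intro _ x (conj Dx eq_refl))). simpl in Hz.
      rewrite hip_add, hip_scal in Hz. rewrite hip_scalr.
      pose proof (f_equal Re Hz). pose proof (f_equal Im Hz). simpl in *.
      C_ring; lra. }
    destruct (adj_of_hip B z (hscal Cmi z) (proj1 B_sa) Adj) as [Dz Ez].
    pose proof (self_adjoint_adj_dom B z B_sa Dz) as Bz.
    assert (Ez' : app B z = hscal Cmi z) by (rewrite (proj2 (proj2 B_sa)) by exact Bz; exact Ez).
    pose proof (f_equal Im (self_adjoint_hip B B_sa z z Bz Bz)) as S1.
    rewrite Ez', hip_scal, hip_scalr in S1. simpl in S1. rewrite Im_hip_diag in S1.
    apply sqnorm_eq0. unfold sqnorm. lra.
Qed.

(* The range of [B - i] is dense and, [B] being closed, also closed. *)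
Lemma shift_i_onto : forall h, exists u, dom B u /\ app (op_shift B Cmi) u = h.
Proof.
  intro h.
  destruct (approx_seq (app (op_shift B Cmi)) (dom B) h) as [us [Dus Hus]].
  { intros eps He. destruct (shift_i_range_dense h eps He) as [y [[u [Du <-]] Hu]].
    exists u. auto. }
  pose proof (converges_cauchy _ _ Hus) as Cus.
  destruct (cauchy_converges us) as [u Hu].
  { apply (cauchy_le _ _ (fun m n => proj1 (proj2 (shift_i_norm_bounds _ _ (Dus m) (Dus n))))).
    exact Cus. }
  destruct (cauchy_converges (fun n => app B (us n))) as [v Hv].
  { apply (cauchy_le _ _ (fun m n => proj1 (shift_i_norm_bounds _ _ (Dus m) (Dus n)))).
    exact Cus. }
  destruct (self_adjoint_closed B B_sa us u v Dus Hu Hv) as [Du <-].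
  exists u. split; [exact Du|].
  apply (converges_unique (fun n => app (op_shift B Cmi) (us n))); [|exact Hus].
  apply (converges_le_sum _ _ _ _ _ _
           (fun n => proj2 (proj2 (shift_i_norm_bounds _ _ (Dus n) Du)))); assumption.
Qed.

End SelfAdjointRange.

Section Transport.
Context {X Y : Hilbert}.
Variables (A : op X) (T : op Y) (f : X -> Y).
Hypothesis f_lin : lin_map f.
Hypothesis T_dom : forall y, dom T y <-> image f (dom A) y.
Hypothesis T_app : forall x, dom A x -> app T (f x) = f (app A x).

Lemma op_linear_transport : op_linear A -> op_linear T.
Proof.
  intros [D0 [Dadd Dscal]]. split; [|split].
  - apply T_dom. exists hzero. split; [exact D0|apply lin_map_0, f_lin].
  - intros u v Du Dv.
    apply T_dom in Du as [x [Dx <-]]. apply T_dom in Dv as [y [Dy <-]].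
    destruct (Dadd x y Dx Dy) as [D E]. rewrite <- (proj1 f_lin).
    split; [apply T_dom; exists (hadd x y); auto|].
    rewrite !T_app, E, (proj1 f_lin) by assumption. reflexivity.
  - intros a u Du. apply T_dom in Du as [x [Dx <-]].
    destruct (Dscal a x Dx) as [D E]. rewrite <- (proj2 f_lin).
    split; [apply T_dom; exists (hscal a x); auto|].
    rewrite !T_app, E, (proj2 f_lin) by assumption. reflexivity.
Qed.

(* [T - i] is onto but maps [f(D(A))] into the range of [f]. *)
Lemma onto_of_self_adjoint_transport : self_adjoint T -> onto f.
Proof.
  intros Tsa h. destruct (shift_i_onto T Tsa h) as [u [Du E]].
  apply T_dom in Du as [x [Dx <-]]. simpl in E. rewrite T_app in E by exact Dx.
  rewrite <- (proj2 f_lin), <- (proj1 f_lin) in E. eexists. exact E.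
Qed.

End Transport.

Section MetricOperator.
Variables (H K : Hilbert) (A : op H) (G S : H -> H) (J : H -> K).
Hypothesis A_dd : densely_defined A.
Hypothesis S_lin : lin_map S.
Hypothesis S_bounded : exists M, forall x, hnorm (S x) <= M * hnorm x.
Hypothesis S_sym : symmetric S.
Hypothesis SS_G : forall x, S (S x) = G x.
Hypothesis G_pos : forall x, x <> hzero -> 0 < Re (hip (G x) x).
Hypothesis J_lin : lin_map J.
Hypothesis J_hip : forall x y, hip (J x) (J y) = hip (S x) (S y).
Hypothesis J_dense : dense (range J).

Lemma S_inj x y : S x = S y -> x = y.
Proof.
  apply lin_map_inj; [exact S_lin|]. intros w Sw. apply NNPP. intro Hw.
  pose proof (G_pos w Hw) as P. rewrite <- SS_G, Sw, (lin_map_0 S S_lin), hip_0l in P.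
  simpl in P. lra.
Qed.

Lemma hnorm_J_hsub x y : hnorm (hsub (J x) (J y)) = hnorm (hsub (S x) (S y)).
Proof. rewrite <- !lin_map_hsub by assumption. unfold hnorm. rewrite J_hip. reflexivity. Qed.

Lemma J_inj x y : J x = J y -> x = y.
Proof.
  intro E. apply S_inj, hsub_eq0, hnorm_eq0.
  rewrite <- hnorm_J_hsub, E, hsub_diag. apply hnorm_0.
Qed.

Lemma S_lipschitz : exists M, forall x y, hnorm (hsub (S x) (S y)) <= M * hnorm (hsub x y).
Proof.
  destruct S_bounded as [M HM]. exists M. intros x y.
  rewrite <- lin_map_hsub by exact S_lin. apply HM.
Qed.

Lemma S_range_dense : dense (range S).
Proof.
  apply dense_of_orth_trivial.
  - exists hzero. apply lin_map_0, S_lin.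
  - intros u v [x <-] [y <-]. exists (hadd x y). apply (proj1 S_lin).
  - intros a u [x <-]. exists (hscal a x). apply (proj2 S_lin).
  - intros z Hz. apply S_inj. rewrite (lin_map_0 S S_lin). apply sqnorm_eq0. unfold sqnorm.
    rewrite <- S_sym, (Hz (S (S z))) by (exists (S z); reflexivity). reflexivity.
Qed.

Lemma J_onto_of_S_onto : onto S -> onto J.
Proof.
  apply (onto_of_same_distances S J); [intros; symmetry; apply hnorm_J_hsub|exact J_dense].
Qed.

Lemma S_onto_of_J_onto : onto J -> onto S.
Proof. apply (onto_of_same_distances J S); [exact hnorm_J_hsub|exact S_range_dense]. Qed.

Lemma conj_op_app x : dom A x -> app (conj_op S A) (S x) = S (app A x).
Proof.
  intro Dx. simpl. do 2 f_equal. apply S_inj.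
  apply (epsilon_spec (inhabits hzero) (fun x' => S x' = S x)). exists x. reflexivity.
Qed.

Lemma op_in_app x : dom A x -> app (op_in J A) (J x) = J (app A x).
Proof.
  intro Dx. simpl. do 2 f_equal. apply J_inj.
  apply (epsilon_spec (inhabits hzero) (fun x' => dom A x' /\ J x' = J x)). exists x. auto.
Qed.

Lemma conj_op_dd : densely_defined (conj_op S A).
Proof.
  split.
  - apply (op_linear_transport A _ S S_lin); [reflexivity|exact conj_op_app|apply A_dd].
  - destruct S_lipschitz as [M HM].
    exact (dense_image_lipschitz S (dom A) M HM (proj2 A_dd) S_range_dense).
Qed.

Lemma op_in_dd : densely_defined (op_in J A).
Proof.
  split.
  - apply (op_linear_transport A _ J J_lin); [reflexivity|exact op_in_app|apply A_dd].
  - destruct S_lipschitz as [M HM].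
    apply (dense_image_lipschitz J (dom A) M); [|exact (proj2 A_dd)|exact J_dense].
    intros x y. rewrite hnorm_J_hsub. apply HM.
Qed.

Lemma cond_i_ii : cond_i G A -> cond_ii S A.
Proof.
  intros [DAstar AstarG]. apply self_adjoint_intro; [exact conj_op_dd| |].
  - intros u v [x [Dx <-]] [y [Dy <-]]. rewrite !conj_op_app by assumption.
    assert (DGy : dom (adj A) (G y)) by (apply DAstar; exists y; auto).
    rewrite S_sym, SS_G, (adj_hip A _ DGy x Dx), AstarG, <- SS_G, <- S_sym by exact Dy.
    reflexivity.
  - intros y Dy. set (z := app (adj (conj_op S A)) y).
    assert (DSy : dom (adj A) (S y)).
    { exists (S z). intros x Dx. rewrite <- !S_sym, <- conj_op_app by exact Dx.
      apply (adj_hip _ y Dy). exists x. auto. }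
    apply DAstar in DSy as [x [Dx E]]. rewrite <- SS_G in E. apply S_inj in E. subst y.
    exists x. auto.
Qed.

Lemma cond_ii_iii : cond_ii S A -> cond_iii J A.
Proof.
  intro Bsa.
  assert (Jon : onto J).
  { apply J_onto_of_S_onto, (onto_of_self_adjoint_transport A (conj_op S A) S S_lin);
      [reflexivity|exact conj_op_app|exact Bsa]. }
  apply self_adjoint_intro; [exact op_in_dd| |].
  - intros u v [x [Dx <-]] [y [Dy <-]].
    rewrite !op_in_app, !J_hip, <- !conj_op_app by assumption.
    apply (self_adjoint_hip _ Bsa); [exists x | exists y]; auto.
  - intros k Dk. destruct (Jon k) as [v <-].
    destruct (Jon (app (adj (op_in J A)) (J v))) as [w Ew].
    assert (DSv : dom (adj (conj_op S A)) (S v)).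
    { exists (S w). intros u [x [Dx <-]].
      rewrite conj_op_app, <- !J_hip, <- op_in_app, Ew by exact Dx.
      apply (adj_hip _ _ Dk). exists x. auto. }
    apply (self_adjoint_adj_dom _ _ Bsa) in DSv as [x [Dx E]]. apply S_inj in E. subst v.
    exists x. auto.
Qed.

Lemma cond_iii_iv : cond_iii J A -> cond_iv G A.
Proof.
  intro Tsa.
  assert (Gon : onto G).
  { assert (Son : onto S).
    { apply S_onto_of_J_onto, (onto_of_self_adjoint_transport A (op_in J A) J J_lin);
        [reflexivity|exact op_in_app|exact Tsa]. }
    intro y. destruct (Son y) as [a <-]. destruct (Son a) as [v <-].
    exists v. symmetry. apply SS_G. }
  assert (AstarG : forall x, dom A x -> dom (adj A) (G x) /\ app (adj A) (G x) = G (app A x)).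
  { intros x Dx. apply adj_of_hip; [exact A_dd|]. intros y Dy.
    rewrite <- !SS_G, <- (S_sym (app A y)), <- (S_sym y), <- !J_hip, <- !op_in_app by assumption.
    apply (self_adjoint_hip _ Tsa); [exists y | exists x]; auto. }
  split; [|intros x Dx; apply AstarG, Dx].
  intro y. split.
  - intros [x [Dx <-]]. destruct (AstarG x Dx) as [D E].
    split; [exact D|]. rewrite E. exists (app A x). reflexivity.
  - intros [Dy _]. destruct (Gon y) as [v <-].
    destruct (Gon (app (adj A) (G v))) as [w Ew].
    assert (DJv : dom (adj (op_in J A)) (J v)).
    { exists (J w). intros k [x [Dx <-]].
      rewrite op_in_app, !J_hip, S_sym, SS_G, (S_sym x), SS_G, Ew by exact Dx.
      apply adj_hip; assumption. }
    apply (self_adjoint_adj_dom _ _ Tsa) in DJv as [x [Dx E]]. apply J_inj in E. subst v.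
    exists x. auto.
Qed.

End MetricOperator.

Lemma cond_iv_i {H : Hilbert} (G : H -> H) (A : op H) :
  (forall y, dom (adj A) y -> dom (inv_op G) (app (adj A) y)) -> cond_iv G A -> cond_i G A.
Proof.
  intros HR [DGinvAstar AstarG]. split; [|exact AstarG]. intro y.
  rewrite DGinvAstar. split; [intros [Dy _]; exact Dy|]. intro Dy. split; [exact Dy|apply HR, Dy].
Qed.

Theorem proposition5p14 (H : Hilbert) (A : op H) (G S : H -> H) (K : Hilbert) (J : H -> K)
  (hA_dense : densely_defined A) (hA_closed : closed_op A)
  (hG : bounded_metric G) (hS : is_pos_sqrt G S) (hK : is_G_completion S J) :
  (cond_i G A -> cond_ii S A) /\
  (cond_ii S A -> cond_iii J A) /\
  (cond_iii J A -> cond_iv G A) /\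
  ((forall y, dom (adj A) y -> dom (inv_op G) (app (adj A) y)) ->
     (cond_i G A <-> cond_ii S A) /\ (cond_i G A <-> cond_iii J A) /\
     (cond_i G A <-> cond_iv G A)).
Proof.
  destruct hS as [[S_lin S_bounded] [S_sym [_ SS_G]]].
  destruct hG as [_ [_ G_pos]].
  destruct hK as [J_lin [J_hip J_dense]].
  assert (i_ii : cond_i G A -> cond_ii S A) by (eapply cond_i_ii; eassumption).
  assert (ii_iii : cond_ii S A -> cond_iii J A) by (eapply cond_ii_iii; eassumption).
  assert (iii_iv : cond_iii J A -> cond_iv G A) by (eapply cond_iii_iv; eassumption).
  split; [exact i_ii|]. split; [exact ii_iii|]. split; [exact iii_iv|].
  intro HR. pose proof (cond_iv_i G A HR) as iv_i.
  split; [|split]; split; intro Hc.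
  - exact (i_ii Hc).
  - exact (iv_i (iii_iv (ii_iii Hc))).
  - exact (ii_iii (i_ii Hc)).
  - exact (iv_i (iii_iv Hc)).
  - exact (iii_iv (ii_iii (i_ii Hc))).
  - exact (iv_i Hc).
Qed.
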